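(* Let $\mathcal{L}$ be a lineage with hierarchical generator $\mathcal{H}$. Then (i) for every $\psi\in\mathcal{L}$, $\psi\in\operatorname{span}(\mathcal{H}\cap\mathrm{desc}(\psi))$, where $\mathrm{desc}(\psi)=\bigcup_{k\ge1}\mathrm{ch}^k(\psi)$; (ii) for every $\ell\in\mathbb{Z}_{\ge0}$ and $k\in\mathbb{Z}^+$, $\mathcal{H}^{\ell+k}\subset\mathrm{ch}^k(\mathcal{L}^\ell)$.
   Context: Fix integers $d\ge1$, $n\ge2$, $m\ge2$; $s=n-1$, $p=m-1$. B-splines $\varphi^\ell_{\vec i}(\vec x)=\prod_kQ(n^\ell x_k-i_k)$ on $\mathbb{R}^d$ for $\ell\in\mathbb{Z}_{\ge0}$, $\vec i\in\mathbb{Z}^d$, $Q$ the uniform B-spline of order $m$ with knots $0,\dots,m$; $\mathfrak{B}$ the set of all of them, $\ell_\varphi$ the level. $\mathcal{B}^0=\{\varphi^0_{\vec i}:\vec i\in[-p:0]^d\}$. Children $\mathrm{ch}(\varphi^\ell_{\vec i})=\{\varphi^{\ell+1}_{\vec k}:n\vec i\le\vec k\le n\vec i+sm\}$ (componentwise), extended to sets by union, $\mathrm{ch}^k$ its $k$-fold application; each $\varphi^\ell_{\vec i}$ is a linear combination with positive coefficients of its children. A lineage is a finite $\mathcal{L}\subset\mathfrak{B}$ with $\mathcal{L}\subset\mathcal{B}^0\cup\mathrm{ch}(\mathcal{L})$; its hierarchical generator is $\mathcal{H}=(\mathcal{B}^0\cup\mathrm{ch}(\mathcal{L}))\setminus\mathcal{L}$.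 For a set $\mathcal{F}\subset\mathfrak{B}$, $\mathcal{F}^\ell$ denotes its elements of level $\ell$. *)

From Stdlib Require Import Reals ZArith List.
Open Scope R_scope.

(* Uniform B-spline of order k with knots 0,1,...,k (Cox--de Boor recursion):
   N_1 = indicator of [0,1),
   N_k(x) = (x N_{k-1}(x) + (k - x) N_{k-1}(x-1)) / (k-1). *)
Fixpoint Qspl (k : nat) (x : R) : R :=
  match k with
  | O => 0
  | S O => if Rle_dec 0 x then (if Rlt_dec x 1 then 1 else 0) else 0
  | S (S _ as k1) => (x * Qspl k1 x + (INR k1 + 1 - x) * Qspl k1 (x - 1)) / INR k1
  end.

(* A B-spline phi^l_i is identified by its level l and multi-index i in Z^d
   (a list of length d). Distinct (l,i) give distinct functions. *)
Record bspl := mkB { lev : nat; pos : list Z }.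

Fixpoint prodR (d : nat) (f : nat -> R) : R :=
  match d with O => 1 | S d' => prodR d' f * f d' end.

(* points of R^d are represented by functions nat -> R (coordinates < d used) *)
Definition phi (n m d : nat) (b : bspl) (x : nat -> R) : R :=
  prodR d (fun k => Qspl m (INR n ^ lev b * x k - IZR (nth k (pos b) 0%Z))).

Definition wf (d : nat) (b : bspl) : Prop := length (pos b) = d.

Definition B0 (m d : nat) (b : bspl) : Prop :=
  wf d b /\ lev b = 0%nat /\
  forall k, (k < d)%nat -> (- Z.of_nat (m - 1) <= nth k (pos b) 0 <= 0)%Z.

Definition child (n m d : nat) (b b' : bspl) : Prop :=
  wf d b' /\ lev b' = S (lev b) /\
  forall k, (k < d)%nat ->
    (Z.of_nat n * nth k (pos b) 0 <= nth k (pos b') 0 <=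
     Z.of_nat n * nth k (pos b) 0 + Z.of_nat ((n - 1) * m))%Z.

Definition chS (n m d : nat) (S : bspl -> Prop) (b' : bspl) : Prop :=
  exists b, S b /\ child n m d b b'.

Fixpoint chk (n m d : nat) (k : nat) (S : bspl -> Prop) : bspl -> Prop :=
  match k with
  | O => S
  | S k' => chS n m d (chk n m d k' S)
  end.

Definition finite_set (S : bspl -> Prop) : Prop :=
  exists l : list bspl, forall b, S b <-> In b l.

Definition lineage (n m d : nat) (L : bspl -> Prop) : Prop :=
  finite_set L /\ (forall b, L b -> wf d b) /\
  (forall b, L b -> B0 m d b \/ chS n m d L b).

Definition hgen (n m d : nat) (L : bspl -> Prop) (b : bspl) : Prop :=
  (B0 m d b \/ chS n m d L b) /\ ~ L b.

Definition desc (n m d : nat) (psi : bspl) (b : bspl) : Prop :=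
  exists k, (1 <= k)%nat /\ chk n m d k (fun c => c = psi) b.

Definition atLevel (F : bspl -> Prop) (l : nat) (b : bspl) : Prop :=
  F b /\ lev b = l.

Definition lincomb (n m d : nat) (cs : list (R * bspl)) (x : nat -> R) : R :=
  fold_right (fun cb acc => fst cb * phi n m d (snd cb) x + acc) 0 cs.

Definition in_span (n m d : nat) (S : bspl -> Prop) (psi : bspl) : Prop :=
  exists cs : list (R * bspl),
    (forall cb, In cb cs -> S (snd cb)) /\
    forall x : nat -> R, phi n m d psi x = lincomb n m d cs x.

From Pilot Require Import Defs.
From Stdlib Require Import Reals ZArith List Wf_nat Lia Lra FunctionalExtensionality.
Open Scope R_scope.

(** The uniform B-spline satisfies [Q_{k+1} = Δ^{k+1} t_+^k / k!], and the
    unit difference factors as [Δ = S ∘ Δ_{1/n}], where [S] sums [n]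
    translates by multiples of [1/n]. Rescaling [t_+^k] by [n] then yields a
    two-scale relation [Q_m(t) = Σ_j c_j Q_m(n t - j)] with [0 <= j <= (n-1) m],
    and its tensor product writes every [φ^ℓ_i] as a combination of its
    children. Part (i) follows by induction on the gap between the level of
    [ψ] and the top level of the finite lineage: each child of [ψ] is either
    in [H] or again in [L]. Part (ii) follows by walking up the parent chain
    inside [L], which is possible because only level-0 B-splines lack parents. *)

Fixpoint sumL {A : Type} (w : A -> R) (l : list A) : R :=
  match l with nil => 0 | a :: l' => w a + sumL w l' end.

Lemma sumL_app {A : Type} (w : A -> R) l1 l2 :
  sumL w (l1 ++ l2) = sumL w l1 + sumL w l2.
Proof. induction l1; cbn [sumL app]; [ring | rewrite IHl1; ring]. Qed.

Lemma sumL_map {A B : Type} (w : B -> R) (f : A -> B) l :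
  sumL w (map f l) = sumL (fun a => w (f a)) l.
Proof. induction l; cbn [sumL map]; [ring | rewrite IHl; ring]. Qed.

Lemma sumL_flat_map {A B : Type} (w : B -> R) (f : A -> list B) l :
  sumL w (flat_map f l) = sumL (fun a => sumL w (f a)) l.
Proof. induction l; cbn [sumL flat_map]; [ring | rewrite sumL_app, IHl; ring]. Qed.

Lemma sumL_ext {A : Type} (w1 w2 : A -> R) l :
  (forall a, In a l -> w1 a = w2 a) -> sumL w1 l = sumL w2 l.
Proof.
  induction l as [|a l IH]; intro H; cbn [sumL]; [ring|].
  rewrite H by (left; reflexivity).
  rewrite IH by (intros; apply H; right; assumption). ring.
Qed.

Lemma sumL_mulr {A : Type} (w : A -> R) l c :
  sumL w l * c = sumL (fun a => w a * c) l.
Proof. induction l; cbn [sumL]; [ring | rewrite <- IHl; ring]. Qed.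

Lemma sumL_mull {A : Type} (w : A -> R) l c :
  c * sumL w l = sumL (fun a => c * w a) l.
Proof. induction l; cbn [sumL]; [ring | rewrite <- IHl; ring]. Qed.

Lemma sumL_minus {A : Type} (w1 w2 : A -> R) l :
  sumL (fun a => w1 a - w2 a) l = sumL w1 l - sumL w2 l.
Proof. induction l; cbn [sumL]; [ring | rewrite IHl; ring]. Qed.

Lemma sumL_telescope (g : nat -> R) N :
  sumL (fun i => g i - g (S i)) (seq 0 N) = g 0%nat - g N.
Proof. induction N; [simpl; ring|]. rewrite seq_S, sumL_app, IHN; simpl; ring. Qed.

Definition diff (h : R) (f : R -> R) (x : R) : R := f x - f (x - h).

Fixpoint diffs (h : R) (k : nat) (f : R -> R) : R -> R :=
  match k with O => f | S k' => diff h (diffs h k' f) end.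

Definition tpow (k : nat) (x : R) : R := if Rle_dec 0 x then x ^ k else 0.

Lemma tpow_S k : tpow (S k) = fun y => y * tpow k y.
Proof. extensionality y. unfold tpow. destruct (Rle_dec 0 y); simpl; ring. Qed.

Lemma tpow_dilate r k y : 0 < r -> tpow k (r * y) = r ^ k * tpow k y.
Proof.
  intro Hr. unfold tpow.
  destruct (Rle_dec 0 (r * y)), (Rle_dec 0 y); try (exfalso; nra).
  - apply Rpow_mult_distr.
  - ring.
Qed.

Lemma diffs_mul_id j g x :
  diffs 1 (S j) (fun y => y * g y) x =
  x * diffs 1 (S j) g x + INR (S j) * diffs 1 j g (x - 1).
Proof.
  revert x; induction j; intro x.
  - cbn [diffs]. unfold diff. simpl INR. ring.
  - change (diffs 1 (S (S j)) (fun y => y * g y) x) with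
      (diffs 1 (S j) (fun y => y * g y) x - diffs 1 (S j) (fun y => y * g y) (x - 1)).
    rewrite !IHj.
    change (diffs 1 (S (S j)) g x) with (diffs 1 (S j) g x - diffs 1 (S j) g (x - 1)).
    change (diffs 1 (S j) g (x - 1)) with
      (diffs 1 j g (x - 1) - diffs 1 j g (x - 1 - 1)).
    rewrite (S_INR (S j)). ring.
Qed.

Lemma Qspl_diffs_tpow k x : Qspl (S k) x = diffs 1 (S k) (tpow k) x / INR (fact k).
Proof.
  revert x; induction k; intro x.
  - simpl. unfold diff, tpow.
    destruct (Rle_dec 0 x), (Rle_dec 0 (x - 1)); try destruct (Rlt_dec x 1); simpl; lra.
  - change (Qspl (S (S k)) x) with
      ((x * Qspl (S k) x + (INR (S k) + 1 - x) * Qspl (S k) (x - 1)) / INR (S k)).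
    rewrite !IHk, tpow_S, diffs_mul_id.
    change (diffs 1 (S (S k)) (tpow k) x) with
      (diffs 1 (S k) (tpow k) x - diffs 1 (S k) (tpow k) (x - 1)).
    change (fact (S k)) with (S k * fact k)%nat.
    rewrite mult_INR, (S_INR (S k)).
    assert (INR (S k) <> 0) by (apply not_0_INR; lia).
    assert (INR (fact k) <> 0) by apply INR_fact_neq_0.
    field; auto.
Qed.

Definition boxsum (n : nat) (h : R) (f : R -> R) (x : R) : R :=
  sumL (fun i => f (x - INR i * h)) (seq 0 n).

Fixpoint boxsums (n : nat) (h : R) (k : nat) (f : R -> R) : R -> R :=
  match k with O => f | S k' => boxsum n h (boxsums n h k' f) end.

Lemma diff_boxsum n h f x : INR n * h = 1 -> diff 1 f x = boxsum n h (diff h f) x.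
Proof.
  intro Hnh. unfold diff, boxsum.
  rewrite (sumL_ext _ (fun i => (fun j => f (x - INR j * h)) i
                                - (fun j => f (x - INR j * h)) (S i))).
  - rewrite sumL_telescope, Hnh. simpl INR. f_equal; f_equal; ring.
  - intros i _. rewrite S_INR. f_equal; f_equal; ring.
Qed.

Lemma diff_boxsum_comm n h f x : diff h (boxsum n h f) x = boxsum n h (diff h f) x.
Proof.
  unfold diff, boxsum. rewrite <- sumL_minus.
  apply sumL_ext; intros i _. f_equal; f_equal; ring.
Qed.

Lemma diff_boxsums_comm n h k f : diff h (boxsums n h k f) = boxsums n h k (diff h f).
Proof.
  induction k; [reflexivity|]. cbn [boxsums]. rewrite <- IHk.
  extensionality x. apply diff_boxsum_comm.
Qed.

Lemma diffs_factor n h k f : INR n * h = 1 -> diffs 1 k f = boxsums n h k (diffs h k f).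
Proof.
  intro Hnh. revert f; induction k; intro f; [reflexivity|].
  cbn [diffs boxsums]. rewrite IHk. extensionality x.
  rewrite (diff_boxsum n h) by assumption. now rewrite diff_boxsums_comm.
Qed.

Lemma diffs_dilate r h k F : r * h = 1 ->
  diffs h k (fun y => F (r * y)) = fun x => diffs 1 k F (r * x).
Proof.
  intro Hrh. induction k; [reflexivity|]. cbn [diffs]. rewrite IHk.
  extensionality x. unfold diff. do 2 f_equal. rewrite <- Hrh. ring.
Qed.

Lemma diffs_scal h k F c : diffs h k (fun y => c * F y) = fun x => c * diffs h k F x.
Proof.
  induction k; [reflexivity|]. cbn [diffs]. rewrite IHk.
  extensionality x. unfold diff. ring.
Qed.

Lemma boxsums_scal n h k F c :
  boxsums n h k (fun y => c * F y) = fun x => c * boxsums n h k F x.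
Proof.
  induction k; [reflexivity|]. cbn [boxsums]. rewrite IHk.
  extensionality x. unfold boxsum. now rewrite sumL_mull.
Qed.

Lemma Qspl_boxsums_dilate n k x : (1 <= n)%nat ->
  Qspl (S k) x =
  / INR n ^ k * boxsums n (/ INR n) (S k) (fun y => Qspl (S k) (INR n * y)) x.
Proof.
  intro Hn.
  assert (Hpos : 0 < INR n) by (apply lt_0_INR; lia).
  assert (Hnh : INR n * / INR n = 1) by (field; lra).
  assert (Hpk : INR n ^ k <> 0) by (apply pow_nonzero; lra).
  assert (Hfact : INR (fact k) <> 0) by apply INR_fact_neq_0.
  assert (Htp : tpow k = fun y => / INR n ^ k * tpow k (INR n * y)).
  { extensionality y. rewrite tpow_dilate by assumption. field; auto. }
  assert (HQ : (fun y => / INR n ^ k * diffs 1 (S k) (tpow k) (INR n * y)) =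
               (fun y => (/ INR n ^ k * INR (fact k)) * Qspl (S k) (INR n * y))).
  { extensionality y. rewrite Qspl_diffs_tpow. field; auto. }
  rewrite Qspl_diffs_tpow, (diffs_factor n (/ INR n)), Htp, diffs_scal, diffs_dilate,
    HQ, boxsums_scal by assumption.
  field; auto.
Qed.

Definition translates (g : R -> R) (h : R) (cs : list (R * nat)) (x : R) : R :=
  sumL (fun p => fst p * g (x - INR (snd p) * h)) cs.

Definition translate_comb (g : R -> R) (h : R) (J : nat) (F : R -> R) : Prop :=
  exists cs, (forall p, In p cs -> (snd p <= J)%nat) /\
             forall x, F x = translates g h cs x.

Lemma translate_comb_self g h : translate_comb g h 0 g.
Proof.
  exists ((1, 0%nat) :: nil). split.
  - intros p [<-|[]]; simpl; lia.
  - intro x. unfold translates; cbn [sumL fst snd]. simpl INR.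
    replace (x - 0 * h) with x by ring. ring.
Qed.

Lemma translate_comb_zero g h J : translate_comb g h J (fun _ => 0).
Proof. exists nil. split; [intros p []|reflexivity]. Qed.

Lemma translate_comb_weaken g h J J' F :
  (J <= J')%nat -> translate_comb g h J F -> translate_comb g h J' F.
Proof.
  intros HJ [cs [Hb HF]]. exists cs. split; auto.
  intros p Hp. specialize (Hb p Hp). lia.
Qed.

Lemma translate_comb_add g h J F1 F2 :
  translate_comb g h J F1 -> translate_comb g h J F2 ->
  translate_comb g h J (fun x => F1 x + F2 x).
Proof.
  intros [c1 [H1 E1]] [c2 [H2 E2]]. exists (c1 ++ c2). split.
  - intros p Hp. apply in_app_or in Hp as [Hp|Hp]; auto.
  - intro x. unfold translates. now rewrite sumL_app, E1, E2.
Qed.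

Lemma translate_comb_shift g h J F i :
  translate_comb g h J F -> translate_comb g h (J + i) (fun x => F (x - INR i * h)).
Proof.
  intros [cs [Hb HF]]. exists (map (fun p => (fst p, (snd p + i)%nat)) cs). split.
  - intros p Hp. apply in_map_iff in Hp as [q [<- Hq]]. simpl. specialize (Hb q Hq). lia.
  - intro x. rewrite HF. unfold translates. rewrite sumL_map.
    apply sumL_ext; intros p _. cbn [fst snd]. rewrite plus_INR. f_equal; f_equal; ring.
Qed.

Lemma translate_comb_boxsum g h n J F :
  translate_comb g h J F -> translate_comb g h (J + (n - 1)) (boxsum n h F).
Proof.
  intro HF. unfold boxsum.
  assert (Hseq : forall i, In i (seq 0 n) -> (i <= n - 1)%nat)
    by (intros i Hi; apply in_seq in Hi; lia).
  induction (seq 0 n) as [|i l IH]; cbn [sumL].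
  - apply translate_comb_zero.
  - apply translate_comb_add.
    + apply translate_comb_weaken with (J + i)%nat.
      * specialize (Hseq i (or_introl eq_refl)). lia.
      * now apply translate_comb_shift.
    + apply IH. intros j Hj. apply Hseq. now right.
Qed.

Lemma translate_comb_boxsums g h n k : translate_comb g h (k * (n - 1)) (boxsums n h k g).
Proof.
  induction k; cbn [boxsums].
  - apply translate_comb_self.
  - apply translate_comb_weaken with (k * (n - 1) + (n - 1))%nat; [lia|].
    now apply translate_comb_boxsum.
Qed.

Lemma Qspl_two_scale n m : (1 <= n)%nat -> (1 <= m)%nat ->
  exists cs : list (R * nat), (forall p, In p cs -> (snd p <= (n - 1) * m)%nat) /\
  forall t, Qspl m t = sumL (fun p => fst p * Qspl m (INR n * t - INR (snd p))) cs.
Proof.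
  intros Hn Hm. destruct m as [|k]; [lia|].
  destruct (translate_comb_boxsums (fun y => Qspl (S k) (INR n * y)) (/ INR n) n (S k))
    as [cs [Hb Hx]].
  exists (map (fun p => (/ INR n ^ k * fst p, snd p)) cs). split.
  - intros p Hp. apply in_map_iff in Hp as [q [<- Hq]]. simpl. specialize (Hb q Hq). nia.
  - intro t. rewrite (Qspl_boxsums_dilate n k t Hn), Hx.
    unfold translates. rewrite sumL_map, sumL_mull.
    apply sumL_ext; intros p _. cbn [fst snd].
    assert (0 < INR n) by (apply lt_0_INR; lia).
    replace (INR n * (t - INR (snd p) * / INR n)) with (INR n * t - INR (snd p))
      by (field; lra).
    ring.
Qed.

Definition child_index (n m d : nat) (i j : list Z) : Prop :=
  length j = d /\ forall k, (k < d)%nat ->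
    (Z.of_nat n * nth k i 0 <= nth k j 0 <=
     Z.of_nat n * nth k i 0 + Z.of_nat ((n - 1) * m))%Z.

Lemma child_index_snoc n m d i j z :
  child_index n m d i j ->
  (Z.of_nat n * nth d i 0 <= z <= Z.of_nat n * nth d i 0 + Z.of_nat ((n - 1) * m))%Z ->
  child_index n m (S d) i (j ++ z :: nil).
Proof.
  intros [Hl Hb] Hz. split.
  - rewrite length_app, Hl. simpl. lia.
  - intros k Hk. destruct (Nat.lt_ge_cases k d).
    + rewrite app_nth1 by lia. now apply Hb.
    + replace k with d by lia. rewrite app_nth2, Hl, Nat.sub_diag by lia. exact Hz.
Qed.

Lemma prodR_ext d f g : (forall k, (k < d)%nat -> f k = g k) -> prodR d f = prodR d g.
Proof.
  induction d; intro H; cbn [prodR]; [reflexivity|].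
  rewrite IHd by (intros; apply H; lia). rewrite H by lia. reflexivity.
Qed.

Lemma tensor_two_scale n m (s : R) (i : list Z) d : (1 <= n)%nat -> (1 <= m)%nat ->
  exists vs : list (R * list Z),
    (forall p, In p vs -> child_index n m d i (snd p)) /\
    forall x : nat -> R,
      prodR d (fun k => Qspl m (s * x k - IZR (nth k i 0%Z))) =
      sumL (fun p => fst p *
              prodR d (fun k => Qspl m (INR n * s * x k - IZR (nth k (snd p) 0%Z)))) vs.
Proof.
  intros Hn Hm. induction d as [|d IH].
  - exists ((1, nil) :: nil). split.
    + intros p [<-|[]]. split; [reflexivity | intros; lia].
    + intro x. simpl. ring.
  - destruct IH as [vs [Hv Hx]]. destruct (Qspl_two_scale n m Hn Hm) as [cs [Hc Hq]].
    exists (flat_map (fun p => map (fun q =>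
        (fst p * fst q, snd p ++ (Z.of_nat n * nth d i 0%Z + Z.of_nat (snd q))%Z :: nil)) cs) vs).
    split.
    + intros p Hp. apply in_flat_map in Hp as [p0 [Hp0 Hq0]].
      apply in_map_iff in Hq0 as [q [<- Hqcs]]. apply child_index_snoc; auto.
      specialize (Hc q Hqcs). lia.
    + intro x. cbn [prodR]. rewrite Hx, (Hq (s * x d - IZR (nth d i 0%Z))).
      rewrite sumL_flat_map, sumL_mulr. apply sumL_ext; intros p Hp.
      destruct (Hv p Hp) as [Hl _].
      rewrite sumL_map, sumL_mull. apply sumL_ext; intros q _. cbn [fst snd].
      set (z := (Z.of_nat n * nth d i 0 + Z.of_nat (snd q))%Z).
      rewrite (prodR_ext d
        (fun k => Qspl m (INR n * s * x k - IZR (nth k (snd p ++ z :: nil) 0%Z)))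
        (fun k => Qspl m (INR n * s * x k - IZR (nth k (snd p) 0%Z)))).
      2:{ intros k Hk. now rewrite app_nth1 by lia. }
      rewrite app_nth2, Hl, Nat.sub_diag by lia. cbn [nth]. unfold z.
      rewrite plus_IZR, mult_IZR, <- !INR_IZR_INZ.
      replace (INR n * s * x d - (INR n * IZR (nth d i 0%Z) + INR (snd q)))
        with (INR n * (s * x d - IZR (nth d i 0%Z)) - INR (snd q)) by ring.
      ring.
Qed.

Lemma lincomb_sumL n m d cs x :
  lincomb n m d cs x = sumL (fun cb => fst cb * phi n m d (snd cb) x) cs.
Proof. induction cs; simpl; [reflexivity | now rewrite <- IHcs]. Qed.

Lemma phi_refine n m d (b : bspl) : (1 <= n)%nat -> (1 <= m)%nat ->
  exists cs : list (R * bspl), (forall cb, In cb cs -> child n m d b (snd cb)) /\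
  forall x, phi n m d b x = lincomb n m d cs x.
Proof.
  intros Hn Hm.
  destruct (tensor_two_scale n m (INR n ^ lev b) (Defs.pos b) d Hn Hm) as [vs [Hv Hx]].
  exists (map (fun p => (fst p, mkB (S (lev b)) (snd p))) vs). split.
  - intros cb Hcb. apply in_map_iff in Hcb as [p [<- Hp]].
    destruct (Hv p Hp) as [Hl Hb]. split; [exact Hl | split; [reflexivity | exact Hb]].
  - intro x. rewrite lincomb_sumL, sumL_map. unfold phi at 1. now rewrite Hx.
Qed.

Section Span.

Variables n m d : nat.

Lemma in_span_self (S : bspl -> Prop) b : S b -> in_span n m d S b.
Proof.
  intro Hb. exists ((1, b) :: nil). split.
  - now intros cb [<-|[]].
  - intro x. simpl. ring.
Qed.

Lemma in_span_mono (S S' : bspl -> Prop) b :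
  (forall c, S c -> S' c) -> in_span n m d S b -> in_span n m d S' b.
Proof. intros HS [cs [Hcs Hx]]. exists cs. split; auto. Qed.

Lemma in_span_lincomb (S : bspl -> Prop) psi cs :
  (forall x, phi n m d psi x = lincomb n m d cs x) ->
  (forall cb, In cb cs -> in_span n m d S (snd cb)) -> in_span n m d S psi.
Proof.
  intros Hpsi Hcs.
  enough (exists es, (forall eb, In eb es -> S (snd eb)) /\
                     forall x, lincomb n m d cs x = lincomb n m d es x)
    as [es [Hes Hx]] by (exists es; split; [exact Hes | intro x; rewrite Hpsi; apply Hx]).
  clear Hpsi. induction cs as [|a cs IH].
  - exists nil. split; [intros _ []|reflexivity].
  - destruct IH as [es [Hes Hx]]; [intros cb Hcb; apply Hcs; now right|].
    destruct (Hcs a (or_introl eq_refl)) as [ds [Hds Hdx]].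
    exists (map (fun db => (fst a * fst db, snd db)) ds ++ es). split.
    + intros eb Heb. apply in_app_or in Heb as [Heb|Heb]; auto.
      apply in_map_iff in Heb as [db [<- Hdb]]. exact (Hds db Hdb).
    + intro x. specialize (Hx x). specialize (Hdx x).
      rewrite !lincomb_sumL in *. cbn [sumL]. rewrite Hx, Hdx.
      rewrite sumL_app, sumL_map, sumL_mull. f_equal.
      apply sumL_ext; intros; cbn [fst snd]; ring.
Qed.

Lemma desc_child_self psi c : child n m d psi c -> desc n m d psi c.
Proof. intro Hc. exists 1%nat. split; [lia|]. now exists psi. Qed.

Lemma desc_child psi c b : child n m d psi c -> desc n m d c b -> desc n m d psi b.
Proof.
  intros Hc [k [Hk Hb]]. exists (S k). split; [lia|].
  clear Hk. revert b Hb. induction k; intros b Hb; cbn [chk] in *.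
  - subst b. now exists psi.
  - destruct Hb as [b0 [H0 H1]]. exists b0. split; auto.
Qed.

End Span.

Lemma bspl_eq_dec (b b' : bspl) : {b = b'} + {b <> b'}.
Proof. decide equality; [apply list_eq_dec, Z.eq_dec | apply Nat.eq_dec]. Qed.

Lemma finite_set_dec (S : bspl -> Prop) : finite_set S -> forall b, S b \/ ~ S b.
Proof.
  intros [l Hl] b. rewrite Hl. destruct (in_dec bspl_eq_dec b l); auto.
Qed.

Lemma finite_set_level_bound (S : bspl -> Prop) :
  finite_set S -> exists M, forall b, S b -> (lev b <= M)%nat.
Proof.
  intros [l Hl]. exists (list_max (map lev l)). intros b Hb.
  assert (Hmax := le_n (list_max (map lev l))).
  apply list_max_le in Hmax. rewrite Forall_forall in Hmax.
  apply Hmax, in_map, Hl, Hb.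
Qed.

Section Lineage.

Variables n m d : nat.
Variable L : bspl -> Prop.
Hypothesis HL : lineage n m d L.

Lemma lineage_in_span psi : (1 <= n)%nat -> (1 <= m)%nat ->
  L psi -> in_span n m d (fun b => hgen n m d L b /\ desc n m d psi b) psi.
Proof.
  intros Hn Hm. destruct HL as [Hfin _].
  destruct (finite_set_level_bound L Hfin) as [M HM].
  induction psi as [psi IH]
    using (well_founded_ind (well_founded_ltof _ (fun b => (M - lev b)%nat))).
  intro Hpsi. destruct (phi_refine n m d psi Hn Hm) as [cs [Hch Hphi]].
  apply (in_span_lincomb n m d _ psi cs Hphi). intros [a c] Hac.
  specialize (Hch _ Hac). cbn [snd] in *.
  destruct (finite_set_dec L Hfin c) as [HLc | HLc].
  - apply in_span_mono with (fun b => hgen n m d L b /\ desc n m d c b).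
    + intros b [Hb Hdesc]. split; [exact Hb | exact (desc_child n m d psi c b Hch Hdesc)].
    + apply IH; [| exact HLc]. unfold ltof.
      destruct Hch as [_ [Hlev _]]. specialize (HM _ HLc). lia.
  - apply in_span_self. split; [| now apply desc_child_self].
    split; [right; now exists psi | exact HLc].
Qed.

Lemma lineage_chk_level l j b :
  L b -> lev b = (l + j)%nat -> chk n m d j (atLevel L l) b.
Proof.
  destruct HL as [_ [_ Hsub]]. revert b. induction j; intros b Hb Hlev.
  - split; auto. lia.
  - destruct (Hsub b Hb) as [[_ [H0 _]] | [p [Hp Hc]]]; [lia|].
    exists p. split; [|exact Hc]. apply IHj; auto. destruct Hc as [_ [Hpl _]]. lia.
Qed.

Lemma hgen_chk_level l k b :
  hgen n m d L b -> lev b = (l + S k)%nat -> chk n m d (S k) (atLevel L l) b.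
Proof.
  intros [[[_ [H0 _]] | [p [Hp Hc]]] _] Hlev; [lia|].
  exists p. split; [|exact Hc]. apply lineage_chk_level; auto.
  destruct Hc as [_ [Hpl _]]. lia.
Qed.

End Lineage.

Theorem lemma4p5 (d n m : nat) (Hd : (1 <= d)%nat) (Hn : (2 <= n)%nat)
  (Hm : (2 <= m)%nat) (L : bspl -> Prop) (HL : lineage n m d L) :
  (forall psi, L psi ->
     in_span n m d (fun b => hgen n m d L b /\ desc n m d psi b) psi) /\
  (forall (l k : nat), (1 <= k)%nat ->
     forall b, atLevel (hgen n m d L) (l + k) b ->
       chk n m d k (atLevel L l) b).
Proof.
  split.
  - intros psi. apply lineage_in_span; auto; lia.
  - intros l [|k] Hk b [Hb Hlev]; [lia|].
    now apply hgen_chk_level.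
Qed.
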